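(* Suppose $\mathcal M$ is stable under regular maps. Let \[1\to P \to G \to Q\to 1\] be a short exact sequence of countable groups. Assume $G$ is equipped with a uniformly discrete proper left-invariant metric, and that each finitely generated subgroup of $P$, equipped with the induced metric belongs to $\mathcal M$, and that $Q$ is equipped with the quotient metric. Then $\overline{\operatorname{asdim}}_{\mathcal M}(G)\leq \operatorname{asdim}(Q)$.
   Context: $\mathcal M$ is a class of metric families (collections of $1$-uniformly discrete bounded geometry metric spaces), stable under regular maps (uniformly Lipschitz maps with uniformly bounded preimage cardinalities); a space $X$ belongs to $\mathcal M$ if $\{X\}\in\mathcal M$. $\operatorname{asdim}$ is the usual asymptotic dimension. $\overline{\operatorname{asdim}}_{\mathcal M}(G)$ is the least $d$ such that for every $r$, $G=X_0\cup\dots\cup X_d$ with each $X_i$ a union of pieces pairwise at distance at least $r$, such that, with $\mathcal Z$ the family of pieces, $N^m_s(\mathcal Z)\in\mathcal M$ for all $m,s\geq1$, where $N^0_s(Z)=Z$ and $N^{k+1}_s(Z)$ is the union of all $Z'\in\mathcal Z$ meeting the closed $s$-neighbourhood of $N^k_s(Z)$. *)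

From Stdlib Require Import Reals List.
Open Scope R_scope.

Record Grp := {
  gcar :> Type;
  gmul : gcar -> gcar -> gcar;
  ginv : gcar -> gcar;
  gone : gcar;
  gmulA : forall x y z, gmul x (gmul y z) = gmul (gmul x y) z;
  gmul1 : forall x, gmul gone x = x;
  gmulV : forall x, gmul (ginv x) x = gone
}.

Definition is_hom (A B : Grp) (f : A -> B) : Prop :=
  forall x y, f (gmul A x y) = gmul B (f x) (f y).
Arguments is_hom {A B} f.

Definition countable (T : Type) : Prop :=
  exists f : T -> nat, forall x y, f x = f y -> x = y.

Inductive gen (A : Grp) (S : list A) : A -> Prop :=
| gen_one : gen A S (gone A)
| gen_in : forall x, In x S -> gen A S x
| gen_mul : forall x y, gen A S x -> gen A S y -> gen A S (gmul A x y)
| gen_inv : forall x, gen A S x -> gen A S (ginv A x).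

Record MetricSpace := { msp_car : Type; msp_dist : msp_car -> msp_car -> R }.
Arguments msp_dist {_}.

Record MFamily := { fam_idx : Type; fam_sp : fam_idx -> MetricSpace }.

Definition is_metric (X : Type) (d : X -> X -> R) : Prop :=
  (forall x y, 0 <= d x y) /\ (forall x y, d x y = 0 <-> x = y) /\
  (forall x y, d x y = d y x) /\ (forall x y z, d x z <= d x y + d y z).
Arguments is_metric {X} d.

(* family of 1-uniformly discrete metric spaces with (uniformly) bounded geometry *)
Definition is_metric_family (F : MFamily) : Prop :=
  (forall i, is_metric (@msp_dist (fam_sp F i))) /\
  (forall i (x y : msp_car (fam_sp F i)), x <> y -> 1 <= msp_dist x y) /\
  (forall r : R, exists K : nat, forall i (x : msp_car (fam_sp F i))
      (l : list (msp_car (fam_sp F i))),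
      NoDup l -> (forall y, In y l -> msp_dist x y <= r) -> (length l <= K)%nat).

Definition regular_map (F' F : MFamily) : Prop :=
  exists (L : R) (K : nat), forall j : fam_idx F', exists i : fam_idx F,
    exists f : msp_car (fam_sp F' j) -> msp_car (fam_sp F i),
      (forall x y, msp_dist (f x) (f y) <= L * msp_dist x y) /\
      (forall y l, NoDup l -> (forall x, In x l -> f x = y) -> (length l <= K)%nat).

Definition stable_under_regular_maps (M : MFamily -> Prop) : Prop :=
  forall F F', M F -> is_metric_family F' -> regular_map F' F -> M F'.

Definition single_family (X : MetricSpace) : MFamily :=
  {| fam_idx := unit; fam_sp := fun _ => X |}.

Definition belongs_to (M : MFamily -> Prop) (X : MetricSpace) : Prop :=
  M (single_family X).

(* X = X_0 u ... u X_dd, each X_c a union of the pieces Z j with colour c j = c,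
   distinct pieces of the same colour at distance >= r. *)
Definition r_decomposition (X : Type) (dist : X -> X -> R) (r : R) (dd : nat)
  (J : Type) (Z : J -> X -> Prop) (c : J -> nat) : Prop :=
  (forall j, (c j <= dd)%nat) /\
  (forall x, exists j, Z j x) /\
  (forall j j', j <> j' -> c j = c j' ->
     forall x y, Z j x -> Z j' y -> r <= dist x y).
Arguments r_decomposition {X} dist r dd {J} Z c.

Definition asdim_prop (X : Type) (dist : X -> X -> R) (dd : nat) : Prop :=
  forall r : R, exists (J : Type) (Z : J -> X -> Prop) (c : J -> nat),
    r_decomposition dist r dd Z c /\
    exists B : R, forall j x y, Z j x -> Z j y -> dist x y <= B.
Arguments asdim_prop {X} dist dd.

Definition asdim_le (X : Type) (dist : X -> X -> R) (n : nat) : Prop :=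
  exists dd, (dd <= n)%nat /\ asdim_prop dist dd.
Arguments asdim_le {X} dist n.

Fixpoint Nks (X : Type) (dist : X -> X -> R) (J : Type) (Z : J -> X -> Prop)
  (s : R) (k : nat) (j : J) : X -> Prop :=
  match k with
  | O => Z j
  | S k' => fun x => exists j', Z j' x /\
      exists z a, Z j' z /\ Nks X dist J Z s k' j a /\ dist z a <= s
  end.
Arguments Nks {X} dist {J} Z s k j.

Definition subspace (X : Type) (dist : X -> X -> R) (A : X -> Prop) : MetricSpace :=
  {| msp_car := {x : X | A x};
     msp_dist := fun a b => dist (proj1_sig a) (proj1_sig b) |}.
Arguments subspace {X} dist A.

Definition N_family (X : Type) (dist : X -> X -> R) (J : Type) (Z : J -> X -> Prop)
  (m s : nat) : MFamily :=
  {| fam_idx := J; fam_sp := fun j => subspace dist (Nks dist Z (INR s) m j) |}.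
Arguments N_family {X} dist {J} Z m s.

Definition asdimM_prop (M : MFamily -> Prop) (X : Type) (dist : X -> X -> R)
  (dd : nat) : Prop :=
  forall r : R, exists (J : Type) (Z : J -> X -> Prop) (c : J -> nat),
    r_decomposition dist r dd Z c /\
    forall m s : nat, (1 <= m)%nat -> (1 <= s)%nat -> M (N_family dist Z m s).
Arguments asdimM_prop M {X} dist dd.

Definition asdimM_le (M : MFamily -> Prop) (X : Type) (dist : X -> X -> R)
  (n : nat) : Prop :=
  exists dd, (dd <= n)%nat /\ asdimM_prop M dist dd.
Arguments asdimM_le M {X} dist n.

Definition uniformly_discrete1 (X : Type) (d : X -> X -> R) : Prop :=
  forall x y, x <> y -> 1 <= d x y.
Arguments uniformly_discrete1 {X} d.

(* proper (for a uniformly discrete metric): closed balls are finite *)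
Definition proper_metric (X : Type) (d : X -> X -> R) : Prop :=
  forall x (r : R), exists l : list X, forall y, d x y <= r -> In y l.
Arguments proper_metric {X} d.

Definition left_invariant (A : Grp) (d : A -> A -> R) : Prop :=
  forall g x y, d (gmul A g x) (gmul A g y) = d x y.
Arguments left_invariant {A} d.

Definition is_quotient_metric (A B : Grp) (pi : A -> B) (d : A -> A -> R)
  (dQ : B -> B -> R) : Prop :=
  forall q1 q2,
    (forall g1 g2, pi g1 = q1 -> pi g2 = q2 -> dQ q1 q2 <= d g1 g2) /\
    (forall e, 0 < e -> exists g1 g2, pi g1 = q1 /\ pi g2 = q2 /\ d g1 g2 < dQ q1 q2 + e).
Arguments is_quotient_metric {A B} pi d dQ.

Definition fg_subgroup_space (P G : Grp) (i : P -> G) (d : G -> G -> R)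
  (S : list P) : MetricSpace :=
  {| msp_car := {p : P | gen P S p};
     msp_dist := fun a b => d (i (proj1_sig a)) (i (proj1_sig b)) |}.

Arguments fg_subgroup_space {P G} i d S.

(* Take an r-decomposition of Q into uniformly bounded pieces U_j and split each
   preimage pi^-1(U_j) into its r-chain components.  Components of the same U_j
   are r-apart by maximality, those of different U_j of the same colour because
   the quotient metric is 1-Lipschitz.  The set N^m_s of a component based at x0
   stays rho-chained (rho = max r s) inside the preimage of a bounded ball of Q
   around pi x0.  Writing x0^-1 y = i(p) h with h short, consecutive points of a
   rho-chain give values of p that differ by an element of the finite set W of
   p with i(p) in a fixed ball, so y |-> p lands in the finitely generated
   subgroup <W>; this map is uniformly Lipschitz and its fibres inject into the
   finite ball of short h, so it is a regular map and stability of M concludes. *)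

From Stdlib Require Import Reals List Lra Relations.
From Stdlib Require Import Classical ClassicalEpsilon ProofIrrelevance.
From Stdlib Require Import FunctionalExtensionality PropExtensionality.
Open Scope R_scope.

Set Implicit Arguments.
Unset Strict Implicit.

Section GroupFacts.
Variable A : Grp.

Lemma gmulrV (x : A) : gmul A x (ginv A x) = gone A.
Proof.
  rewrite <- (gmul1 A (gmul A x (ginv A x))).
  rewrite <- (gmulV A (ginv A x)) at 1.
  rewrite <- gmulA, (gmulA A (ginv A x) x (ginv A x)), gmulV, gmul1.
  apply gmulV.
Qed.

Lemma gmulr1 (x : A) : gmul A x (gone A) = x.
Proof. now rewrite <- (gmulV A x), gmulA, gmulrV, gmul1. Qed.

Lemma gmul_cancel_l (g x y : A) : gmul A g x = gmul A g y -> x = y.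
Proof.
  intro E. apply (f_equal (gmul A (ginv A g))) in E.
  now rewrite !gmulA, gmulV, !gmul1 in E.
Qed.

Lemma gmul_cancel_r (g x y : A) : gmul A x g = gmul A y g -> x = y.
Proof.
  intro E. apply (f_equal (fun t => gmul A t (ginv A g))) in E.
  now rewrite <- !gmulA, gmulrV, !gmulr1 in E.
Qed.

End GroupFacts.

Section Homomorphisms.
Variables (A B : Grp) (f : A -> B).
Hypothesis Hf : is_hom f.

Lemma hom_one : f (gone A) = gone B.
Proof.
  apply (@gmul_cancel_l B (f (gone A))).
  now rewrite gmulr1, <- Hf, gmul1.
Qed.

Lemma hom_inv (x : A) : f (ginv A x) = ginv B (f x).
Proof.
  apply (@gmul_cancel_r B (f x)).
  rewrite <- Hf, !gmulV. exact hom_one.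
Qed.

End Homomorphisms.

Lemma NoDup_inj_incl_length (X Y : Type) (f : X -> Y) (l : list X) (L : list Y) :
  NoDup l -> (forall a b, In a l -> In b l -> f a = f b -> a = b) ->
  (forall a, In a l -> In (f a) L) -> (length l <= length L)%nat.
Proof.
  intros Hl Hinj Hin. rewrite <- (length_map f l).
  apply NoDup_incl_length.
  - exact (NoDup_map_NoDup_ForallPairs f Hinj Hl).
  - intros y Hy. apply in_map_iff in Hy as [x [<- Hx]]. auto.
Qed.

Lemma list_preimage_inj (X Y : Type) (f : X -> Y) :
  (forall x y, f x = f y -> x = y) ->
  forall L : list Y, exists W : list X, forall x, In (f x) L -> In x W.
Proof.
  intros Hinj. induction L as [|y L [W HW]].
  - now exists nil.
  - destruct (classic (exists x0, f x0 = y)) as [[x0 <-]|Hno].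
    + exists (x0 :: W). intros x [E|Hx]; simpl; auto.
    + exists W. intros x [E|Hx]; auto. exfalso; eauto.
Qed.

Lemma proj1_sig_inj (X : Type) (A : X -> Prop) (a b : {x : X | A x}) :
  proj1_sig a = proj1_sig b -> a = b.
Proof. destruct a, b; simpl. intros ->. apply subset_eq_compat, eq_refl. Qed.

Lemma subspace_is_metric (X : Type) (d : X -> X -> R) (A : X -> Prop) :
  is_metric d -> is_metric (@msp_dist (subspace d A)).
Proof.
  intros [H0 [H1 [Hs Ht]]]. repeat split; simpl; auto.
  - intro E. now apply proj1_sig_inj, H1.
  - intros ->. now apply H1.
Qed.

Section InvariantMetric.
Variables (G : Grp) (d : G -> G -> R).
Hypothesis Hleft : left_invariant d.

Lemma dist_one_mulV (a b : G) : d (gone G) (gmul G (ginv G a) b) = d a b.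
Proof. now rewrite <- (Hleft a), gmulr1, gmulA, gmulrV, gmul1. Qed.

Lemma dist_inv_one (h : G) : d (ginv G h) (gone G) = d (gone G) h.
Proof. now rewrite <- (Hleft h), gmulrV, gmulr1. Qed.

Lemma dist_mulV_l (g h : G) : d (gmul G g (ginv G h)) g = d (gone G) h.
Proof. rewrite <- (gmulr1 g) at 2. now rewrite Hleft, dist_inv_one. Qed.

Lemma dist_mulV_mulV (g h g' h' : G) : is_metric d ->
  d (gmul G g (ginv G h)) (gmul G g' (ginv G h')) <=
  d (gone G) h + d g g' + d (gone G) h'.
Proof.
  intros [_ [_ [Hs Ht]]].
  pose proof (Ht (gmul G g (ginv G h)) g (gmul G g' (ginv G h'))).
  pose proof (Ht g g' (gmul G g' (ginv G h'))).
  rewrite (Hs g' _), !dist_mulV_l in *. lra.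
Qed.

Lemma uniform_ball_bound : proper_metric d ->
  forall r, exists K, forall x (l : list G),
    NoDup l -> (forall y, In y l -> d x y <= r) -> (length l <= K)%nat.
Proof.
  intros Hproper r. destruct (Hproper (gone G) r) as [L HL].
  exists (length L). intros x l Hl Hr.
  apply (NoDup_inj_incl_length (f := gmul G (ginv G x)) (L := L) Hl).
  - intros a b _ _. apply gmul_cancel_l.
  - intros y Hy. apply HL. rewrite dist_one_mulV. auto.
Qed.

Lemma subspace_family_is_metric_family (J : Type) (A : J -> G -> Prop) :
  is_metric d -> uniformly_discrete1 d -> proper_metric d ->
  is_metric_family {| fam_idx := J; fam_sp := fun j => subspace d (A j) |}.
Proof.
  intros Hd Hdisc Hproper. split; [|split].
  - intro j. now apply subspace_is_metric.
  - intros j x y Hne. apply Hdisc. intro E. now apply Hne, proj1_sig_inj.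
  - intro r. destruct (uniform_ball_bound Hproper r) as [K HK]. exists K.
    intros j x l Hl Hr; simpl in *. rewrite <- (length_map (@proj1_sig _ _) l).
    apply (HK (proj1_sig x)).
    + apply NoDup_map_NoDup_ForallPairs; auto.
      intros a b _ _. apply proj1_sig_inj.
    + intros y Hy. apply in_map_iff in Hy as [z [<- Hz]]. exact (Hr z Hz).
Qed.

End InvariantMetric.

Section Chains.
Variables (X : Type) (Ok : X -> Prop) (rel : X -> X -> Prop).

Definition link (a b : X) : Prop := Ok a /\ Ok b /\ rel a b.

Definition chained (x y : X) : Prop := Ok x /\ clos_refl_sym_trans X link x y.

Lemma link_invariant (S : X -> Prop) :
  (forall a b, link a b -> (S a <-> S b)) ->
  forall x y, clos_refl_sym_trans X link x y -> (S x <-> S y).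
Proof. intros HS x y H. induction H; firstorder. Qed.

Lemma chained_refl (x : X) : Ok x -> chained x x.
Proof. split; [assumption | apply rst_refl]. Qed.

Lemma chained_okr (x y : X) : chained x y -> Ok y.
Proof.
  intros [Hx H]. apply (link_invariant (S := Ok)) in H; [tauto|].
  intros a b [Ha [Hb _]]. tauto.
Qed.

Lemma chained_trans (x y z : X) : chained x y -> chained y z -> chained x z.
Proof. intros [Hx H1] [_ H2]. split; [exact Hx | exact (rst_trans _ _ _ _ _ H1 H2)]. Qed.

Lemma chained_sym (x y : X) : chained x y -> chained y x.
Proof. intros H. split; [exact (chained_okr H) | apply rst_sym, H]. Qed.

Lemma chained_snoc (x y z : X) : chained x y -> Ok z -> rel y z -> chained x z.
Proof.
  intros H Hz Hyz. apply (chained_trans H). split; [exact (chained_okr H)|].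
  apply rst_step. split; [exact (chained_okr H) | now split].
Qed.

Lemma chained_class (x y : X) : chained x y -> chained x = chained y.
Proof.
  intros H. apply functional_extensionality; intro w.
  apply propositional_extensionality. split; intro Hw.
  - exact (chained_trans (chained_sym H) Hw).
  - exact (chained_trans H Hw).
Qed.

End Chains.

Lemma chained_mono (X : Type) (Ok Ok' : X -> Prop) (rel rel' : X -> X -> Prop) (x y : X) :
  (forall z, Ok z -> Ok' z) -> (forall a b, rel a b -> rel' a b) ->
  chained Ok rel x y -> chained Ok' rel' x y.
Proof.
  intros HOk Hrel [Hx H]. split; [auto|]. clear Hx.
  induction H as [a b [Ha [Hb Hab]]| | |].
  - apply rst_step. repeat split; auto.
  - apply rst_refl.
  - now apply rst_sym.
  - eapply rst_trans; eauto.
Qed.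

Section QuotientMetric.
Variables (G Q : Grp) (pi : G -> Q) (d : G -> G -> R) (dQ : Q -> Q -> R).
Hypotheses (Hpi : is_hom pi) (Hleft : left_invariant d)
  (HdQ : is_quotient_metric pi d dQ).

Lemma quotient_metric_le (g1 g2 : G) : dQ (pi g1) (pi g2) <= d g1 g2.
Proof. now apply (proj1 (HdQ _ _)). Qed.

Lemma quotient_metric_triangle (q1 q2 q3 : Q) :
  is_metric d -> dQ q1 q3 <= dQ q1 q2 + dQ q2 q3.
Proof.
  intros [_ [_ [_ Ht]]]. apply Rnot_lt_le; intro H.
  set (e := (dQ q1 q3 - dQ q1 q2 - dQ q2 q3) / 2).
  assert (He : 0 < e) by (unfold e; lra).
  destruct (proj2 (HdQ q1 q2) e He) as [g1 [g2 [E1 [E2 L1]]]].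
  destruct (proj2 (HdQ q2 q3) e He) as [g2' [g3 [E2' [E3 L2]]]].
  (* translate the second approximating pair so that it starts at g2 *)
  set (t := gmul G (gmul G g2 (ginv G g2')) g3).
  assert (Et : pi t = q3).
  { unfold t. now rewrite !Hpi, (hom_inv Hpi), E2, E2', gmulrV, gmul1. }
  assert (Dt : d g2 t = d g2' g3).
  { unfold t. rewrite <- (Hleft (gmul G g2 (ginv G g2')) g2' g3).
    now rewrite <- (gmulA G g2 (ginv G g2') g2'), gmulV, gmulr1. }
  pose proof (proj1 (HdQ q1 q3) g1 t E1 Et).
  pose proof (Ht g1 g2 t). unfold e in *. lra.
Qed.

Lemma quotient_short_lift (a b : G) (D : R) : dQ (pi a) (pi b) <= D ->
  exists h, pi h = pi (gmul G (ginv G a) b) /\ d (gone G) h <= D + 1.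
Proof.
  intros HD. destruct (proj2 (HdQ (pi a) (pi b)) 1 Rlt_0_1) as [g1 [g2 [E1 [E2 L]]]].
  exists (gmul G (ginv G g1) g2). split.
  - now rewrite !Hpi, !(hom_inv Hpi), E1, E2.
  - rewrite (dist_one_mulV Hleft). lra.
Qed.

End QuotientMetric.

Section Extension.
Variables (P G Q : Grp) (i : P -> G) (pi : G -> Q) (d : G -> G -> R) (dQ : Q -> Q -> R).
Hypotheses (Hi : is_hom i) (Hiinj : forall x y, i x = i y -> x = y)
  (Hpi : is_hom pi) (Hexact : forall g, pi g = gone Q <-> exists p, i p = g)
  (Hd : is_metric d) (Hdisc : uniformly_discrete1 d) (Hproper : proper_metric d)
  (Hleft : left_invariant d) (HdQ : is_quotient_metric pi d dQ).

Definition chained_within (B rho : R) (A : G -> Prop) : Prop :=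
  forall y z, A y -> A z ->
  chained (fun w => dQ (pi y) (pi w) <= B) (fun a b => d a b <= rho) y z.

(* Each neighbourhood step adds a jump of length at most s followed by a piece of
   Q-diameter at most B. *)
Lemma Nks_chained (J : Type) (Z : J -> G -> Prop) (B rho s : R) :
  0 <= B -> 0 <= s -> s <= rho -> (forall j, chained_within B rho (Z j)) ->
  forall k j x0 y, Z j x0 -> Nks d Z s k j y ->
  chained (fun w => dQ (pi x0) (pi w) <= B + INR k * (s + B))
    (fun a b => d a b <= rho) x0 y.
Proof.
  intros HB Hs0 Hs HZ k. induction k as [|k IH]; intros j x0 y Hx0 Hy.
  - eapply chained_mono; [| | exact (HZ j x0 y Hx0 Hy)]; simpl; intros; lra.
  - destruct Hy as [j' [Hy [z [a [Hz [Ha Hza]]]]]].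
    pose proof (IH j x0 a Hx0 Ha) as Ca.
    pose proof (HZ j' z y Hz Hy) as Czy.
    assert (Hnear : forall w, dQ (pi z) (pi w) <= B ->
      dQ (pi x0) (pi w) <= B + INR (S k) * (s + B)).
    { intros w Hw. rewrite S_INR.
      pose proof (chained_okr Ca).
      pose proof (quotient_metric_le HdQ a z) as Haz.
      destruct Hd as [_ [_ [Hsym _]]]. rewrite (Hsym a z) in Haz.
      pose proof (quotient_metric_triangle Hpi Hleft HdQ (pi x0) (pi a) (pi w) Hd).
      pose proof (quotient_metric_triangle Hpi Hleft HdQ (pi a) (pi z) (pi w) Hd).
      lra. }
    apply (chained_trans (y := z)).
    + apply (chained_snoc (y := a)); [| exact (Hnear z (proj1 Czy)) |].
      * eapply chained_mono; [intros w Hw | intros u v Huv | exact Ca]; cbv beta in *.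
        -- rewrite S_INR. nra.
        -- lra.
      * destruct Hd as [_ [_ [Hsym _]]]. rewrite Hsym. lra.
    + exact (chained_mono Hnear (fun a b h => h) Czy).
Qed.

Lemma short_coordinate (a b : G) (D : R) : dQ (pi a) (pi b) <= D ->
  exists h p, d (gone G) h <= D + 1 /\ i p = gmul G (gmul G (ginv G a) b) (ginv G h).
Proof.
  intros Hab. destruct (quotient_short_lift Hpi Hleft HdQ Hab) as [h [Eh Hh]].
  destruct (proj1 (Hexact (gmul G (gmul G (ginv G a) b) (ginv G h)))) as [p Ep].
  { now rewrite Hpi, (hom_inv Hpi), <- Eh, gmulrV. }
  now exists h, p.
Qed.

Section Coordinates.
Variables (x0 : G) (D rho : R) (W : list P).
Hypotheses (HD : 0 <= D) (Hrho : 0 <= rho)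
  (HW : forall p, d (gone G) (i p) <= 2 * (D + 1) + rho -> In p W).

(* [g h^-1 = i p] says that p is the P-coordinate of g relative to the coset
   representative h. *)
Definition coord_generated (g : G) : Prop :=
  forall h p, d (gone G) h <= D + 1 -> i p = gmul G g (ginv G h) -> gen P W p.

Lemma coord_generated_one : coord_generated (gone G).
Proof.
  intros h p Hh Ep. apply gen_in, HW.
  rewrite Ep, gmul1. destruct Hd as [_ [_ [Hsym _]]].
  rewrite Hsym, (dist_inv_one Hleft). lra.
Qed.

Lemma coord_generated_step (a b : G) :
  dQ (pi x0) (pi a) <= D -> d a b <= rho ->
  coord_generated (gmul G (ginv G x0) a) -> coord_generated (gmul G (ginv G x0) b).
Proof.
  intros Ha Hab Hgen h p Hh Ep.
  destruct (short_coordinate Ha) as [ha [pa [Hha Epa]]].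
  (* p differs from the generated pa by a short element *)
  replace p with (gmul P pa (gmul P (ginv P pa) p)) by now rewrite gmulA, gmulrV, gmul1.
  apply gen_mul; [exact (Hgen ha pa Hha Epa)|].
  apply gen_in, HW.
  rewrite Hi, (hom_inv Hi), (dist_one_mulV Hleft), Epa, Ep.
  eapply Rle_trans; [apply (dist_mulV_mulV Hleft _ _ _ _ Hd)|].
  rewrite Hleft. lra.
Qed.

Lemma chained_coord_generated (y : G) :
  chained (fun z => dQ (pi x0) (pi z) <= D) (fun a b => d a b <= rho) x0 y ->
  coord_generated (gmul G (ginv G x0) y).
Proof.
  intros [_ H].
  apply (link_invariant (S := fun z => coord_generated (gmul G (ginv G x0) z))) in H.
  - apply H. rewrite gmulV. exact coord_generated_one.
  - destruct Hd as [_ [_ [Hsym _]]].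
    intros a b [Ha [Hb Hab]]. split; apply coord_generated_step; auto.
    now rewrite Hsym.
Qed.

Lemma coordinate_dist (y y' h h' : G) :
  y <> y' -> d (gone G) h <= D + 1 -> d (gone G) h' <= D + 1 ->
  d (gmul G (gmul G (ginv G x0) y) (ginv G h)) (gmul G (gmul G (ginv G x0) y') (ginv G h'))
  <= (2 * D + 3) * d y y'.
Proof.
  intros Hne Hh Hh'. pose proof (Hdisc Hne).
  eapply Rle_trans; [apply (dist_mulV_mulV Hleft _ _ _ _ Hd)|].
  rewrite Hleft. nra.
Qed.

Lemma piece_regular_map (A : G -> Prop) (ball : list G) :
  (forall h, d (gone G) h <= D + 1 -> In h ball) ->
  (forall y, A y ->
     chained (fun z => dQ (pi x0) (pi z) <= D) (fun a b => d a b <= rho) x0 y) ->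
  exists f : {y : G | A y} -> {p : P | gen P W p},
    (forall y y', d (i (proj1_sig (f y))) (i (proj1_sig (f y'))) <=
                  (2 * D + 3) * d (proj1_sig y) (proj1_sig y')) /\
    (forall t l, NoDup l -> (forall y, In y l -> f y = t) -> (length l <= length ball)%nat).
Proof.
  intros Hball HA.
  assert (Hcoord : forall y : {y : G | A y}, exists c : G * P,
    d (gone G) (fst c) <= D + 1 /\
    i (snd c) = gmul G (gmul G (ginv G x0) (proj1_sig y)) (ginv G (fst c))).
  { intros [y Hy]. destruct (short_coordinate (chained_okr (HA y Hy))) as [h [p Hhp]].
    now exists (h, p). }
  destruct (choice _ Hcoord) as [c Hc].
  assert (Hgen : forall y, gen P W (snd (c y))).
  { intros y. destruct (Hc y) as [Hh Ep].
    exact (chained_coord_generated (HA _ (proj2_sig y)) Hh Ep). }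
  exists (fun y => exist _ (snd (c y)) (Hgen y)); simpl. split.
  - intros y y'. destruct (classic (y = y')) as [<-|Hne].
    + destruct Hd as [_ [Hd0 _]]. rewrite !(proj2 (Hd0 _ _) eq_refl). lra.
    + destruct (Hc y) as [Hh ->], (Hc y') as [Hh' ->].
      apply coordinate_dist; [|assumption..].
      intro E. now apply Hne, proj1_sig_inj.
  - intros t l Hl Ht.
    apply (NoDup_inj_incl_length (f := fun y => fst (c y)) (L := ball) Hl).
    + intros y y' Hy Hy' E.
      assert (Ei : i (snd (c y)) = i (snd (c y'))) by exact
        (f_equal (fun q => i (proj1_sig q)) (eq_trans (Ht y Hy) (eq_sym (Ht y' Hy')))).
      rewrite (proj2 (Hc y)), (proj2 (Hc y')), E in Ei.
      apply gmul_cancel_r, gmul_cancel_l in Ei. now apply proj1_sig_inj.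
    + intros y _. apply Hball, (Hc y).
Qed.

End Coordinates.

Section NeighbourhoodFamilies.
Variable M : MFamily -> Prop.
Hypotheses (HMstab : stable_under_regular_maps M)
  (HP : forall S : list P, belongs_to M (fg_subgroup_space i d S)).

Lemma N_family_in_M (J : Type) (Z : J -> G -> Prop) (B rho : R) (m s : nat) :
  0 <= B -> 0 <= rho -> INR s <= rho -> (forall j, exists x, Z j x) ->
  (forall j, chained_within B rho (Z j)) -> M (N_family d Z m s).
Proof.
  intros HB Hrho Hs Hne HZ.
  set (D := B + INR m * (INR s + B)).
  assert (HD : 0 <= D) by (unfold D; pose proof (pos_INR m); pose proof (pos_INR s); nra).
  destruct (Hproper (gone G) (2 * (D + 1) + rho)) as [L HL].
  destruct (list_preimage_inj Hiinj L) as [W HW].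
  destruct (Hproper (gone G) (D + 1)) as [ball Hball].
  apply (HMstab (F := single_family (fg_subgroup_space i d W))).
  - apply HP.
  - apply subspace_family_is_metric_family; assumption.
  - exists (2 * D + 3), (length ball). intro j. exists tt.
    destruct (Hne j) as [x0 Hx0].
    apply (piece_regular_map (x0 := x0) HD Hrho (fun p Hp => HW p (HL _ Hp)) Hball).
    intros y Hy. exact (Nks_chained HB (pos_INR s) Hs HZ Hx0 Hy).
Qed.

End NeighbourhoodFamilies.

Section Components.
Variables (JQ : Type) (U : JQ -> Q -> Prop) (r : R).

Definition component (j : JQ) (x0 : G) : G -> Prop :=
  chained (fun z => U j (pi z)) (fun a b => d a b < r) x0.

(* Indexing components by their underlying set, not by a base point, makes
   distinct indices give distinct pieces, as the separation condition requires. *)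
Definition component_index : Type :=
  {jA : JQ * (G -> Prop) | exists x0, U (fst jA) (pi x0) /\ snd jA = component (fst jA) x0}.

Definition component_piece (c : component_index) : G -> Prop := snd (proj1_sig c).

Definition component_colour (cQ : JQ -> nat) (c : component_index) : nat :=
  cQ (fst (proj1_sig c)).

Lemma component_decomposition (dd : nat) (cQ : JQ -> nat) :
  r_decomposition dQ r dd U cQ ->
  r_decomposition d r dd component_piece (component_colour cQ).
Proof.
  intros [Hc [Hcov Hsep]]. split; [|split].
  - intros c. apply Hc.
  - intros x. destruct (Hcov (pi x)) as [j Hj].
    exists (exist _ (j, component j x) (ex_intro _ x (conj Hj eq_refl))).
    now apply chained_refl.
  - intros [[j A] [x0 [Hx0 EA]]] [[j' A'] [x1 [Hx1 EA']]] Hne Hcol x y Hx Hy.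
    unfold component_piece, component_colour, component in *; simpl in *. subst A A'.
    destruct (classic (j = j')) as [<-|Hjj'].
    + apply Rnot_lt_le; intro Hxy. apply Hne, proj1_sig_inj; simpl. f_equal.
      rewrite (chained_class Hx), (chained_class Hy).
      apply chained_class, (chained_snoc (chained_refl _ (chained_okr Hx)));
        [exact (chained_okr Hy) | exact Hxy].
    + eapply Rle_trans; [| apply (quotient_metric_le HdQ)].
      exact (Hsep j j' Hjj' Hcol _ _ (chained_okr Hx) (chained_okr Hy)).
Qed.

Lemma component_chained_within (B rho : R) :
  (forall j q q', U j q -> U j q' -> dQ q q' <= B) -> r <= rho ->
  forall c, chained_within B rho (component_piece c).
Proof.
  intros HU Hr [[j A] [x0 [Hx0 EA]]] y z Hy Hz.
  unfold component_piece, component in *; simpl in *; subst A.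
  rewrite (chained_class Hy) in Hz.
  eapply chained_mono; [| | exact Hz]; simpl; intros; [|lra].
  apply (HU j); [exact (proj1 Hz) | assumption].
Qed.

Lemma component_piece_nonempty (c : component_index) : exists x, component_piece c x.
Proof.
  destruct c as [[j A] [x0 [Hx0 EA]]]. exists x0.
  unfold component_piece; simpl in *. subst A. now apply chained_refl.
Qed.

End Components.

End Extension.

Theorem proposition2p9
  (M : MFamily -> Prop)
  (HMfam : forall F, M F -> is_metric_family F)
  (HMstab : stable_under_regular_maps M)
  (P G Q : Grp) (i : P -> G) (pi : G -> Q)
  (Hi : is_hom i) (Hiinj : forall x y, i x = i y -> x = y)
  (Hpi : is_hom pi) (Hpisurj : forall q, exists g, pi g = q)
  (Hexact : forall g, pi g = gone Q <-> exists p, i p = g)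
  (HcP : countable P) (HcG : countable G) (HcQ : countable Q)
  (d : G -> G -> R) (Hd : is_metric d) (Hdisc : uniformly_discrete1 d)
  (Hproper : proper_metric d) (Hleft : left_invariant d)
  (HP : forall S : list P, belongs_to M (fg_subgroup_space i d S))
  (dQ : Q -> Q -> R) (HdQ : is_quotient_metric pi d dQ)
  (n : nat) (Hn : asdim_le dQ n) :
  asdimM_le M d n.
Proof.
  destruct Hn as [dd [Hdd Hasd]]. exists dd. split; [exact Hdd|]. intro r.
  destruct (Hasd r) as [JQ [U [cQ [HU [B0 HB0]]]]].
  exists (component_index pi d U r), (@component_piece _ _ pi d _ U r), (component_colour cQ).
  split; [exact (component_decomposition HdQ HU)|].
  intros m s _ _.
  apply (N_family_in_M Hi Hiinj Hpi Hexact Hd Hdisc Hproper Hleft HdQ HMstab HP)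
    with (B := Rmax B0 0) (rho := Rmax r (INR s)).
  - apply Rmax_r.
  - eapply Rle_trans; [apply pos_INR | apply Rmax_r].
  - apply Rmax_r.
  - apply component_piece_nonempty.
  - intro c. apply component_chained_within; [| apply Rmax_l].
    intros j q q' Hq Hq'. eapply Rle_trans; [exact (HB0 j q q' Hq Hq') | apply Rmax_l].
Qed.
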